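(* Let $\mathbb{I}$ be a finite list of implementations and $\mathbb{M}_0$ a finite set of pairwise inequivalent FSMs such that every $\mathcal{I}\in\mathbb{I}$ is equivalent to some model in $\mathbb{M}_0$. Executing $\textsc{IncrementalFingerprinting}_{\mathcal{C}}(\mathbb{I},\mathbb{M}_0)$ returns $\mathbb{M}$ and $\mu$ such that $\mathbb{M}=\mathbb{M}_0$ and, for every $\mathcal{I}\in\mathbb{I}$ and every $\mathcal{M}\in\mathbb{M}$, $\mu(\mathcal{I})=\mathcal{M}$ iff $\mathcal{I}\sim\mathcal{M}$.
   Context: Fix finite sets $I$ (inputs) and $O$ (outputs). An FSM is $(Q,q_0,\delta,\lambda)$ with $\delta:Q\times I\to Q$, $\lambda:Q\times I\to O$ extended to input words; $\lambda(w)=\lambda(q_0,w)$. For $L\subseteq I^*$, $\mathcal{M}_0\sim_L\mathcal{M}_1$ means $\lambda^{\mathcal{M}_0}(w)=\lambda^{\mathcal{M}_1}(w)$ for all $w\in L$; $\sim$ means $\sim_{I^*}$. Implementations are black-box FSMs. A fingerprint for a set $\mathbb{M}$ is a set of words containing a separating word for every pair of non-equivalent models of $\mathbb{M}$, each word separating some pair. Component contracts: (i) $\textsc{Fingerprinting}_{\mathcal{C}}(\mathcal{I},\mathbb{M})$ executes a subset $L_F$ of a fingerprint for $\mathbb{M}$ and returns $L_F$ and $\mathcal{M}$ if $\mathcal{M}\in\mathbb{M}$ is the only model with $\mathcal{I}\sim_{L_F}\mathcal{M}$, else $L_F$ and None; when $\mathcal{I}$ is equivalent to some model of $\mathbb{M}$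 (closed world), it returns exactly one model. (ii) $\textsc{ConfQuery}_{\mathcal{C}}(\mathcal{I},\mathcal{M})$ returns $(b,L_{CQ})$ with $b$ true iff $\mathcal{I}\sim_{L_{CQ}}\mathcal{M}$. (iii) $\textsc{Learn}_{\mathcal{C}}(\mathcal{I},\mathbb{M},L_F)$ returns $(\mathcal{M},L_L)$ with $\mathcal{I}\sim_{L_F\cup L_L}\mathcal{M}$. $\textsc{IdentifyOrLearn}_{\mathcal{C}}(\mathcal{I},\mathbb{M})$: if $\mathbb{M}=\emptyset$ return $\textsc{Learn}_{\mathcal{C}}(\mathcal{I},\mathbb{M},\emptyset)$; else $(\mathcal{M},L_F)=\textsc{Fingerprinting}_{\mathcal{C}}(\mathcal{I},\mathbb{M})$; if $\mathcal{M}\neq$ None, $(b,L_{CQ})=\textsc{ConfQuery}_{\mathcal{C}}(\mathcal{I},\mathcal{M})$, $L_F:=L_F\cup L_{CQ}$, and if $b$ return $(\mathcal{M},L_F)$; then $(\mathcal{M},L_L)=\textsc{Learn}_{\mathcal{C}}(\mathcal{I},\mathbb{M},L_F)$ and return $(\mathcal{M},L_F\cup L_L)$. $\textsc{IncrementalFingerprinting}_{\mathcal{C}}(\mathbb{I},\mathbb{M}_0)$: set $\mathbb{M}:=\mathbb{M}_0$; for each $\mathcal{I}\in\mathbb{I}$ in order, let $(\mathcal{M},L)=\textsc{IdentifyOrLearn}_{\mathcal{C}}(\mathcal{I},\mathbb{M})$, set $\mathbb{M}:=\mathbb{M}\cup\{\mathcal{M}\}$, $\gamma(\mathcal{I}):=L$,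 $\mu(\mathcal{I}):=\mathcal{M}$; return $\mathbb{M},\gamma,\mu$. *)

From mathcomp Require Import all_boot.
From Stdlib Require List.
Set Implicit Arguments. Unset Strict Implicit. Unset Printing Implicit Defensive.

Section FSMs.
Variables (I O : finType).

Record fsm := FSM {
  state : finType;
  init : state;
  delta : state -> I -> state;
  lam : state -> I -> O }.

Fixpoint lam_from (M : fsm) (q : state M) (w : seq I) : seq O :=
  match w with
  | [::] => [::]
  | a :: w' => lam q a :: lam_from (delta q a) w'
  end.

Definition out (M : fsm) (w : seq I) : seq O := lam_from (init M) w.

Definition equiv_on (L : seq I -> Prop) (M1 M2 : fsm) : Prop :=
  forall w, L w -> out M1 w = out M2 w.

Definition fsm_equiv (M1 M2 : fsm) : Prop := equiv_on (fun _ => True) M1 M2.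

(* ~_L for a finite, explicitly executed set of words *)
Definition equiv_list (L : seq (seq I)) (M1 M2 : fsm) : Prop :=
  equiv_on (fun w => w \in L) M1 M2.

Definition separates (w : seq I) (M1 M2 : fsm) : Prop := out M1 w <> out M2 w.

Definition is_fingerprint (F : seq I -> Prop) (Ms : list fsm) : Prop :=
  (forall M1 M2, List.In M1 Ms -> List.In M2 Ms -> ~ fsm_equiv M1 M2 ->
     exists w, F w /\ separates w M1 M2) /\
  (forall w, F w -> exists M1 M2,
     List.In M1 Ms /\ List.In M2 Ms /\ separates w M1 M2).

Definition pairwise_inequiv (Ms : list fsm) : Prop :=
  forall M1 M2, List.In M1 Ms -> List.In M2 Ms -> M1 <> M2 -> ~ fsm_equiv M1 M2.

Definition unique_match (Imp : fsm) (Ms : list fsm) (L : seq (seq I)) (M : fsm) :=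
  List.In M Ms /\ equiv_list L Imp M /\
  (forall M', List.In M' Ms -> equiv_list L Imp M' -> M' = M).

Definition fingerprinting_spec
    (Fp : fsm -> list fsm -> seq (seq I) * option fsm) : Prop :=
  forall Imp Ms,
    let (LF, r) := Fp Imp Ms in
    (exists F, is_fingerprint F Ms /\ forall w, w \in LF -> F w) /\
    (forall M, r = Some M <-> unique_match Imp Ms LF M) /\
    (r = None <-> ~ exists M, unique_match Imp Ms LF M) /\
    (pairwise_inequiv Ms -> (exists M, List.In M Ms /\ fsm_equiv Imp M) ->
       exists M, r = Some M).

Definition confquery_spec (CQ : fsm -> fsm -> bool * seq (seq I)) : Prop :=
  forall Imp M, let (b, LCQ) := CQ Imp M in b = true <-> equiv_list LCQ Imp M.

Definition learn_spec
    (Ln : fsm -> list fsm -> seq (seq I) -> fsm * seq (seq I)) : Prop :=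
  forall Imp Ms LF, let (M, LL) := Ln Imp Ms LF in equiv_list (LF ++ LL) Imp M.

Section Algo.
Variables (Fp : fsm -> list fsm -> seq (seq I) * option fsm)
          (CQ : fsm -> fsm -> bool * seq (seq I))
          (Ln : fsm -> list fsm -> seq (seq I) -> fsm * seq (seq I)).

Definition identify_or_learn (Imp : fsm) (Ms : list fsm) : fsm * seq (seq I) :=
  match Ms with
  | [::] => Ln Imp Ms [::]
  | _ =>
    let (LF, r) := Fp Imp Ms in
    let learn (LF0 : seq (seq I)) :=
      let (M', LL) := Ln Imp Ms LF0 in (M', LF0 ++ LL) in
    match r with
    | Some M =>
      let (b, LCQ) := CQ Imp M in
      if b then (M, LF ++ LCQ) else learn (LF ++ LCQ)
    | None => learn LF
    end
  end.

(* Returns the final set of models and, for each implementation of the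
   input list (in order), the triple (I, gamma(I), mu(I)).
   M ∪ {M'} is represented by M' :: M (sets are read via List.In). *)
Fixpoint incremental_fingerprinting (Is : list fsm) (Ms : list fsm)
  : list fsm * list (fsm * seq (seq I) * fsm) :=
  match Is with
  | [::] => (Ms, [::])
  | Imp :: Is' =>
    let (M, L) := identify_or_learn Imp Ms in
    let (Ms', log) := incremental_fingerprinting Is' (M :: Ms) in
    (Ms', (Imp, L, M) :: log)
  end.
End Algo.
End FSMs.

(* In the closed world, Fingerprinting returns a model M that is the only one
   agreeing with Imp on the executed words LF. The model equivalent to Imp
   agrees with it on LF too, so it is M; the conformance query then succeeds
   and Learn is never called. Thus each step returns an equivalent model that
   is already in the set, the set never grows, and pairwise inequivalence
   makes that equivalent model unique. *)
From mathcomp Require Import all_boot.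
From Stdlib Require List.
From Stdlib Require Classical_Prop.

Set Implicit Arguments.
Unset Strict Implicit.
Unset Printing Implicit Defensive.

Section Equivalence.
Variables I O : finType.
Implicit Types (A B C M : fsm I O) (Ms : list (fsm I O)).

Lemma fsm_equiv_trans_l A B C : fsm_equiv A B -> fsm_equiv A C -> fsm_equiv B C.
Proof. by move=> eqAB eqAC w _; rewrite -(eqAB w Logic.I) (eqAC w Logic.I). Qed.

Lemma fsm_equiv_list A B (L : seq (seq I)) : fsm_equiv A B -> equiv_list L A B.
Proof. by move=> eqAB w _; exact: eqAB. Qed.

Lemma pairwise_inequiv_equiv_uniq Ms A B C :
  pairwise_inequiv Ms -> List.In B Ms -> List.In C Ms ->
  fsm_equiv A B -> fsm_equiv A C -> B = C.
Proof.
move=> inequiv inB inC eqAB eqAC; apply: Classical_Prop.NNPP => neqBC.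
exact: inequiv inB inC neqBC (fsm_equiv_trans_l eqAB eqAC).
Qed.

Lemma In_cons_idem M Ms : List.In M Ms -> forall X, List.In X (M :: Ms) <-> List.In X Ms.
Proof. by move=> inM X; split => [[<-|] | inX] //; right. Qed.

Lemma pairwise_inequiv_cons_mem M Ms :
  List.In M Ms -> pairwise_inequiv Ms -> pairwise_inequiv (M :: Ms).
Proof. by move=> inM inequiv A B /(In_cons_idem inM) inA /(In_cons_idem inM); exact: inequiv. Qed.

End Equivalence.

Section ClosedWorld.
Variables I O : finType.
Variables (Fp : fsm I O -> list (fsm I O) -> seq (seq I) * option (fsm I O))
          (CQ : fsm I O -> fsm I O -> bool * seq (seq I))
          (Ln : fsm I O -> list (fsm I O) -> seq (seq I) -> fsm I O * seq (seq I)).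
Hypotheses (FpP : fingerprinting_spec Fp) (CQP : confquery_spec CQ).

Definition closed_world (Imp : fsm I O) (Ms : list (fsm I O)) :=
  exists M, List.In M Ms /\ fsm_equiv Imp M.

Lemma identify_or_learn_closed_world Imp Ms :
  pairwise_inequiv Ms -> closed_world Imp Ms ->
  let M := (identify_or_learn Fp CQ Ln Imp Ms).1 in List.In M Ms /\ fsm_equiv Imp M.
Proof.
case: Ms => [|M1 Ms1] inequiv cw; first by case: cw => ? [].
rewrite /identify_or_learn; set Ms := M1 :: Ms1 in inequiv cw *.
have := FpP Imp Ms; case: (Fp Imp Ms) => LF r [_ [someP [_ identifies]]].
have [M rM] := identifies inequiv cw.
have [inM [_ uniqM]] := proj1 (someP M) rM; rewrite {}rM.
have eqM : fsm_equiv Imp M.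
  by case: cw => M' [inM' eqM']; rewrite -(uniqM M' inM' (fsm_equiv_list eqM')).
have := CQP Imp M; case: (CQ Imp M) => b LCQ bP.
by have -> : b = true by apply/bP; exact: fsm_equiv_list.
Qed.

Lemma incremental_fingerprinting_closed_world Is M0 :
  pairwise_inequiv M0 -> (forall Imp, List.In Imp Is -> closed_world Imp M0) ->
  let (Ms, log) := incremental_fingerprinting Fp CQ Ln Is M0 in
  (forall M, List.In M Ms <-> List.In M M0) /\
  List.Forall2
    (fun Imp (e : fsm I O * seq (seq I) * fsm I O) =>
       e.1.1 = Imp /\ List.In e.2 M0 /\ fsm_equiv Imp e.2)
    Is log.
Proof.
elim: Is M0 => [|Imp Is IH] M0 inequiv cwAll //=.
have := identify_or_learn_closed_world inequiv (cwAll Imp (or_introl erefl)).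
case: (identify_or_learn Fp CQ Ln Imp M0) => M L /= [inM eqM].
have cwIs Imp' : List.In Imp' Is -> closed_world Imp' (M :: M0).
  move=> inIs; have [M' [inM' eqM']] := cwAll Imp' (or_intror inIs).
  by exists M'; split; [right|].
have := IH _ (pairwise_inequiv_cons_mem inM inequiv) cwIs.
case: (incremental_fingerprinting Fp CQ Ln Is (M :: M0)) => Ms log [memMs logP].
split; first by move=> X; rewrite memMs; exact: In_cons_idem.
constructor; first by [].
by apply: List.Forall2_impl logP => Imp' e [-> [/(In_cons_idem inM) ine eqe]].
Qed.

End ClosedWorld.

Theorem theorem3 (I O : finType)
    (Fp : fsm I O -> list (fsm I O) -> seq (seq I) * option (fsm I O))
    (CQ : fsm I O -> fsm I O -> bool * seq (seq I))
    (Ln : fsm I O -> list (fsm I O) -> seq (seq I) -> fsm I O * seq (seq I)) :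
  fingerprinting_spec Fp -> confquery_spec CQ -> learn_spec Ln ->
  forall (Is M0 : list (fsm I O)),
    pairwise_inequiv M0 ->
    (forall Imp, List.In Imp Is -> exists M, List.In M M0 /\ fsm_equiv Imp M) ->
    let (Ms, log) := incremental_fingerprinting Fp CQ Ln Is M0 in
    (forall M, List.In M Ms <-> List.In M M0) /\
    List.Forall2
      (fun Imp (e : fsm I O * seq (seq I) * fsm I O) =>
         e.1.1 = Imp /\
         (forall M, List.In M Ms -> (e.2 = M <-> fsm_equiv Imp M)))
      Is log.
Proof.
(* Learn is never reached in the closed world. *)
move=> FpP CQP _ Is M0 inequiv cw.
have := incremental_fingerprinting_closed_world Ln FpP CQP inequiv cw.
case: (incremental_fingerprinting Fp CQ Ln Is M0) => Ms log [memMs logP].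
split; first by [].
apply: List.Forall2_impl logP => Imp e [-> [ine eqe]]; split => // M /memMs inM.
split; first by move <-.
exact: pairwise_inequiv_equiv_uniq inequiv ine inM eqe.
Qed.
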